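(* Let $X$ be a finite connected poset of length $1$ which does not contain a weak crown. Then $\mathcal{AM}(X)=\mathcal{P}(X)$ if and only if $|\mathrm{Min}(X)|=1$ or $|\mathrm{Max}(X)|=1$.
   Context: The length of $X$ is the maximum of $|C|-1$ over chains $C\subseteq X$. A weak $n$-crown ($n\ge2$) is a poset with $2n$ distinct elements $x_1,\dots,x_n,y_1,\dots,y_n$ such that $x_i<y_i$ for $1\le i\le n$, $x_{i+1}<y_i$ for $1\le i\le n-1$, and $x_1<y_n$ (other comparabilities may exist); $X$ contains a weak crown if some subset of $X$ with the induced order is a weak $n$-crown for some $n\ge2$. For $x<y$, $e_{xy}$ denotes the corresponding incidence-algebra basis element and $B=\{e_{xy}:x<y\}$. $\mathcal{C}(X)$ is the set of maximal chains. For a bijection $\theta:B\to B$ and $C:u_1<\dots<u_m$ in $\mathcal{C}(X)$, $\theta$ is increasing on $C$ if there is $D:v_1<\dots<v_m$ in $\mathcal{C}(X)$ with $\theta(e_{u_iu_j})=e_{v_iv_j}$ for all $i<j$, decreasing if $\theta(e_{u_iu_j})=e_{v_{m-j+1}v_{m-i+1}}$ for all $i<j$. $\mathcal{M}(X)$: bijections $B\to B$ increasing or decreasing on every maximal chain. A walk is a sequence $u_0,\dots,u_m$ where for each $i$ one of $u_i,u_{i+1}$ covers the other; closed if $u_0=u_m$. For a closed walk $\Gamma:u_0,\dots,u_m=u_0$ and $z\in X$: $s^+_{\theta,\Gamma}(z)=|\{i: u_i<u_{i+1},\ \exists w>z,\ \theta(e_{zw})=e_{u_iu_{i+1}}\}|$,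 $s^-_{\theta,\Gamma}(z)=|\{i: u_i>u_{i+1},\ \exists w>z,\ \theta(e_{zw})=e_{u_{i+1}u_i}\}|$, $t^+_{\theta,\Gamma}(z)=|\{i: u_i<u_{i+1},\ \exists w<z,\ \theta(e_{wz})=e_{u_iu_{i+1}}\}|$, $t^-_{\theta,\Gamma}(z)=|\{i: u_i>u_{i+1},\ \exists w<z,\ \theta(e_{wz})=e_{u_{i+1}u_i}\}|$, $0\le i\le m-1$. $\theta$ is admissible if $s^+_{\theta,\Gamma}(z)-s^-_{\theta,\Gamma}(z)=t^+_{\theta,\Gamma}(z)-t^-_{\theta,\Gamma}(z)$ for all closed walks $\Gamma$ and all $z$; $\mathcal{AM}(X)$ is the set of admissible elements of $\mathcal{M}(X)$. A bijection $\theta:B\to B$ is proper if there is an automorphism $\lambda$ of $X$ with $\theta(e_{xy})=e_{\lambda(x)\lambda(y)}$ for all $x<y$, or an anti-automorphism $\lambda$ of $X$ with $\theta(e_{xy})=e_{\lambda(y)\lambda(x)}$ for all $x<y$; $\mathcal{P}(X)$ is the set of proper bijections. *)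

From HB Require Import structures.
From mathcomp Require Import all_boot all_order all_algebra.
Set Implicit Arguments. Unset Strict Implicit. Unset Printing Implicit Defensive.
Import Order.TTheory GRing.Theory.

Local Open Scope order_scope.

Section PosetDefs.
Context {d : Order.disp_t} {T : finPOrderType d}.

Definition Bpairs := {p : T * T | p.1 < p.2}.

Definition is_chain (C : {set T}) : bool :=
  [forall x in C, forall y in C, x >=< y].

Definition maximal_chain (C : {set T}) : Prop :=
  is_chain C /\ (forall C' : {set T}, is_chain C' -> C \subset C' -> C' = C).

Definition poset_length : nat :=
  \max_(C : {set T} | is_chain C) (#|C|).-1.

(** weak crowns (0-indexed: x_0..x_{n-1}, y_0..y_{n-1}) *)
Definition has_weak_crown : Prop :=
  exists (n : nat) (x y : nat -> T),
    [/\ (2 <= n)%N,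
        uniq ([seq x i | i <- iota 0 n] ++ [seq y i | i <- iota 0 n]),
        (forall i, (i < n)%N -> x i < y i),
        (forall i, (i.+1 < n)%N -> x i.+1 < y i)
      & x 0%N < y n.-1].

Definition poset_connected : Prop :=
  forall x y : T, connect (fun a b : T => a >=< b) x y.

Definition Min_set : {set T} := [set x : T | [forall y : T, ~~ (y < x)]].
Definition Max_set : {set T} := [set x : T | [forall y : T, ~~ (x < y)]].

(** theta increasing / decreasing on a maximal chain C, where C is listed
    increasingly as s = u_1 < ... < u_m (0-indexed in the sequence) *)
Definition increasing_on (th : Bpairs -> Bpairs) (C : {set T}) : Prop :=
  forall s : seq T, sorted <%O s -> [set x in s] = C ->
  exists t : seq T,
    [/\ sorted <%O t, maximal_chain [set x in t], size t = size s &
        forall (x0 : T) (i j : nat), (i < j < size s)%N ->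
        forall b : Bpairs, val b = (nth x0 s i, nth x0 s j) ->
          val (th b) = (nth x0 t i, nth x0 t j)].

Definition decreasing_on (th : Bpairs -> Bpairs) (C : {set T}) : Prop :=
  forall s : seq T, sorted <%O s -> [set x in s] = C ->
  exists t : seq T,
    [/\ sorted <%O t, maximal_chain [set x in t], size t = size s &
        forall (x0 : T) (i j : nat), (i < j < size s)%N ->
        forall b : Bpairs, val b = (nth x0 s i, nth x0 s j) ->
          val (th b) = (nth x0 t (size s - j.+1), nth x0 t (size s - i.+1))].

Definition in_M (th : Bpairs -> Bpairs) : Prop :=
  bijective th /\
  (forall C : {set T}, maximal_chain C -> increasing_on th C \/ decreasing_on th C).

Definition covers (a b : T) : bool :=
  (a < b) && [forall z : T, ~~ ((a < z) && (z < b))].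

Definition walk_adj (a b : T) : bool := covers a b || covers b a.

(** a closed walk u_0, ..., u_m = u_0 is given as u0 :: rest, with
    steps (u_i, u_{i+1}), 0 <= i <= m-1 *)
Definition closed_walk (u0 : T) (rest : seq T) : bool :=
  path walk_adj u0 rest && (last u0 rest == u0).

Definition steps (u0 : T) (rest : seq T) : seq (T * T) := zip (u0 :: rest) rest.

Definition s_plus (th : Bpairs -> Bpairs) (u0 : T) (rest : seq T) (z : T) : nat :=
  count (fun st : T * T => (st.1 < st.2) &&
     [exists b : Bpairs, ((val b).1 == z) && (val (th b) == (st.1, st.2))])
    (steps u0 rest).
Definition s_minus (th : Bpairs -> Bpairs) (u0 : T) (rest : seq T) (z : T) : nat :=
  count (fun st : T * T => (st.2 < st.1) &&
     [exists b : Bpairs, ((val b).1 == z) && (val (th b) == (st.2, st.1))])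
    (steps u0 rest).
Definition t_plus (th : Bpairs -> Bpairs) (u0 : T) (rest : seq T) (z : T) : nat :=
  count (fun st : T * T => (st.1 < st.2) &&
     [exists b : Bpairs, ((val b).2 == z) && (val (th b) == (st.1, st.2))])
    (steps u0 rest).
Definition t_minus (th : Bpairs -> Bpairs) (u0 : T) (rest : seq T) (z : T) : nat :=
  count (fun st : T * T => (st.2 < st.1) &&
     [exists b : Bpairs, ((val b).2 == z) && (val (th b) == (st.2, st.1))])
    (steps u0 rest).

Definition admissible (th : Bpairs -> Bpairs) : Prop :=
  forall (u0 : T) (rest : seq T), closed_walk u0 rest ->
  forall z : T,
    ((s_plus th u0 rest z)%:Z - (s_minus th u0 rest z)%:Z
     = (t_plus th u0 rest z)%:Z - (t_minus th u0 rest z)%:Z)%R.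

Definition in_AM (th : Bpairs -> Bpairs) : Prop := in_M th /\ admissible th.

Definition is_automorphism (l : T -> T) : Prop :=
  bijective l /\ (forall x y, (x <= y) = (l x <= l y)).
Definition is_antiautomorphism (l : T -> T) : Prop :=
  bijective l /\ (forall x y, (x <= y) = (l y <= l x)).

Definition is_proper (th : Bpairs -> Bpairs) : Prop :=
  (exists l, is_automorphism l /\
     forall b : Bpairs, val (th b) = (l (val b).1, l (val b).2)) \/
  (exists l, is_antiautomorphism l /\
     forall b : Bpairs, val (th b) = (l (val b).2, l (val b).1)).

End PosetDefs.

(* In a poset of length one every maximal chain is a single edge x < y, so every
   bijection of B lies in M(X).  A walk from a to b avoiding an edge a < b can be
   shortened to a simple path; its steps alternate up and down, so together with
   the edge it would form a weak crown.  Hence every edge is a bridge of the Hasse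
   diagram, every closed walk crosses it as often upwards as downwards, and every
   bijection is admissible: AM(X) is the set of all bijections of B.
   If m is the only minimal (maximal) element, the edges are the pairs (m, x)
   (resp. (x, m)), so a bijection of B is a permutation of X fixing m, and any such
   permutation is an automorphism.  Otherwise connectivity yields e > c < b > a,
   and the transposition of the edges (c, b), (c, e), which fixes (a, b), is not
   proper. *)

From HB Require Import structures.
From mathcomp Require Import all_boot all_order all_algebra perm zify.
Set Implicit Arguments. Unset Strict Implicit. Unset Printing Implicit Defensive.
Import Order.TTheory GRing.Theory.
Local Open Scope order_scope.

Lemma count_sum_mem (V : finType) (a : pred V) (s : seq V) :
  count a s = (\sum_(v : V) a v * count_mem v s)%N.
Proof.
elim: s => [|x s IH] /=; first by rewrite big1 // => v _; rewrite muln0.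
under eq_bigr => v _ do rewrite mulnDr.
rewrite big_split /= -IH (bigD1 x) //= eqxx muln1 big1 ?addn0 // => v /negbTE hv.
by rewrite eq_sym hv muln0.
Qed.

Lemma exists_other_in (V : finType) (A : {set V}) (x : V) :
  x \in A -> #|A| != 1%N -> exists2 y, y \in A & y != x.
Proof.
move=> hx; rewrite (cardsD1 x) hx add1n eqSS -lt0n => /card_gt0P[y].
by rewrite !inE => /andP[hyx hy]; exists y.
Qed.

Lemma transport_inj (B V : finType) (k : B -> V) (f : B -> B) :
  injective k -> injective f ->
  exists l : V -> V,
    [/\ injective l, forall v, v \notin codom k -> l v = v & forall b, l (k b) = k (f b)].
Proof.
move=> kinj finj.
pose l v := if [pick b | k b == v] is Some b then k (f b) else v.
have lk b : l (k b) = k (f b).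
  by rewrite /l; case: pickP => [b' /eqP/kinj -> // | /(_ b)]; rewrite eqxx.
have lout v : v \notin codom k -> l v = v.
  by move=> hv; rewrite /l; case: pickP => // b /eqP hb; rewrite -hb codom_f in hv.
exists l; split=> // u v.
case: (boolP (u \in codom k)) => [/codomP[bu ->]|hu];
  case: (boolP (v \in codom k)) => [/codomP[bv ->]|hv].
- by rewrite !lk => /kinj/finj ->.
- by rewrite lk lout // => e; rewrite -e codom_f in hv.
- by rewrite lk lout // => e; rewrite e codom_f in hu.
- by rewrite !lout.
Qed.

Lemma uniq_nth_even_odd (V : eqType) (x0 : V) (w : seq V) (n : nat) :
  uniq w -> size w = n.*2 ->
  uniq ([seq nth x0 w i.*2 | i <- iota 0 n] ++ [seq nth x0 w i.*2.+1 | i <- iota 0 n]).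
Proof.
move=> hw hsz; set I := [seq i.*2 | i <- iota 0 n] ++ [seq i.*2.+1 | i <- iota 0 n].
have -> : [seq nth x0 w i.*2 | i <- iota 0 n] ++ [seq nth x0 w i.*2.+1 | i <- iota 0 n]
    = map (nth x0 w) I by rewrite map_cat -!map_comp.
have I_lt i : i \in I -> (i < size w)%N.
  by rewrite mem_cat hsz => /orP[] /mapP[j]; rewrite mem_iota => /andP[_ hj] ->; lia.
rewrite map_inj_in_uniq => [|i j /I_lt hi /I_lt hj /eqP]; last by rewrite nth_uniq // => /eqP.
have odd_inj : injective (fun i => i.*2.+1) by move=> i j [/double_inj].
rewrite cat_uniq (map_inj_uniq double_inj) (map_inj_uniq odd_inj) iota_uniq /= andbT.
by apply/hasPn => _ /mapP[i _ ->]; apply/mapP => -[j _ /(congr1 odd)]; rewrite /= !odd_double.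
Qed.

Section Bridges.
Variables (V : finType) (e : rel V).

Definition edge_removed (a b : V) : rel V :=
  fun u v => e u v && ((u, v) != (a, b)) && ((u, v) != (b, a)).

Hypothesis e_sym : symmetric e.

Lemma edge_removed_sym (a b : V) : symmetric (edge_removed a b).
Proof.
move=> u v; rewrite /edge_removed e_sym !xpair_eqE.
by rewrite andbAC [(v == a) && _]andbC [(v == b) && _]andbC.
Qed.

Lemma bridge_crossings (a b u0 : V) (rest : seq V) :
  ~~ connect (edge_removed a b) a b -> path e u0 rest -> last u0 rest = u0 ->
  count_mem (a, b) (zip (u0 :: rest) rest) = count_mem (b, a) (zip (u0 :: rest) rest).
Proof.
move=> bridge.
(* [side v] tells whether v is on a's side of the bridge; a step changes it
   exactly when it crosses the bridge. *)
pose side v : nat := connect (edge_removed a b) a v.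
have side_step u v : e u v -> (((u, v) == (b, a)) + side u = ((u, v) == (a, b)) + side v)%N.
  have hab : a != b by apply: contraNneq bridge => <-; rewrite connect0.
  have [[-> ->]|hab'] := eqVneq (u, v) (a, b).
    by rewrite /side connect0 (negbTE bridge) xpair_eqE (negbTE hab).
  have [[-> ->]|hba'] := eqVneq (u, v) (b, a).
    by rewrite /side connect0 (negbTE bridge).
  move=> huv; have huv' : edge_removed a b u v by rewrite /edge_removed huv hab' hba'.
  have huv'' : edge_removed a b v u by rewrite edge_removed_sym.
  rewrite /side; congr (_ + nat_of_bool _)%N; apply/idP/idP => hs.
    exact: connect_trans hs (connect1 huv').
  exact: connect_trans hs (connect1 huv'').
suff walk_sides u r : path e u r ->
    (count_mem (b, a) (zip (u :: r) r) + side u =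
     count_mem (a, b) (zip (u :: r) r) + side (last u r))%N.
  by move=> hp hl; have := walk_sides u0 rest hp; rewrite hl; lia.
elim: r u => [|v r IH] u //= /andP[huv hp].
move: (IH v hp) (side_step u v huv) => hr hs.
by rewrite addnAC hs -addnA [side v + _]addnC hr addnA.
Qed.

End Bridges.

Section Posets.
Context {d : Order.disp_t} {T : finPOrderType d}.

Lemma chain_card_le_length (C : {set T}) :
  is_chain C -> (#|C|.-1 <= poset_length (T := T))%N.
Proof. exact: (@leq_bigmax_cond _ (@is_chain d T) (fun C : {set T} => #|C|.-1)). Qed.

Lemma sorted_lt_chain (s : seq T) : sorted <%O s -> is_chain [set x in s].
Proof.
move=> hs; apply/forall_inP => x; rewrite inE => hx; apply/forall_inP => y; rewrite inE.
elim: s hs x y hx => // z s IH; rewrite /= (path_sortedE lt_trans) => /andP[/allP hz hs] x y.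
rewrite !inE => /predU1P[->|hx] /predU1P[->|hy].
- exact: comparablexx.
- exact/lt_comparable/hz.
- by rewrite comparable_sym; apply/lt_comparable/hz.
- exact: IH.
Qed.

Lemma sorted_lt_size_le_length (s : seq T) :
  sorted <%O s -> ((size s).-1 <= poset_length (T := T))%N.
Proof.
move=> hs; have := chain_card_le_length (sorted_lt_chain hs).
by rewrite cardsE (card_uniqP (lt_sorted_uniq hs)).
Qed.

Lemma exists_lt_of_length_gt0 : (0 < poset_length (T := T))%N -> exists x y : T, x < y.
Proof.
move=> hpos; case: (boolP [exists x : T, exists y : T, x < y]).
  by case/existsP=> x /existsP[y hxy]; exists x, y.
move=> /existsPn hn; have nlt (a b : T) : ~~ (a < b) by move/existsPn: (hn a).
suff : (poset_length (T := T) <= 0)%N by rewrite leqNgt hpos.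
apply/bigmax_leqP => C /forall_inP hC; rewrite leqn0 -subn1 subn_eq0 leqNgt.
apply/negP => /card_gt1P[u [v [hu hv huv]]].
have /forall_inP/(_ v hv)/comparable_ltgtP := hC u hu.
by case=> [h|h|h]; [move: (nlt u v) | move: (nlt v u) | move: huv]; rewrite h ?eqxx.
Qed.

Lemma minset_nlt (x y : T) : x \in Min_set -> ~~ (y < x).
Proof. by rewrite inE => /forallP. Qed.

Lemma maxset_nlt (x y : T) : x \in Max_set -> ~~ (x < y).
Proof. by rewrite inE => /forallP. Qed.

Lemma minset_comparable_le (x y : T) : x \in Min_set -> x >=< y -> x <= y.
Proof. by move=> hx /comparable_leP[] // hyx; have := minset_nlt y hx; rewrite hyx. Qed.

Lemma maxset_comparable_ge (x y : T) : x \in Max_set -> x >=< y -> y <= x.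
Proof. by move=> hx /comparable_ltP[] // hxy; have := maxset_nlt y hx; rewrite hxy. Qed.

Lemma connected_path2 (x y : T) : poset_connected (T := T) -> x != y -> ~~ (x >=< y) ->
  exists v w : T, [/\ x >=< v, v >=< w & uniq [:: x; v; w]].
Proof.
move=> hconn hxy nxy; have /connectP[p0 hp0 hl0] := hconn x y.
case: (shortenP hp0) hl0 => p hp hu _ {hp0 p0}.
case: p hp hu => [|v [|w p]] /= hp hu hl.
- by rewrite hl eqxx in hxy.
- by rewrite hl -(andbT (x >=< v)) hp in nxy.
case/and3P: hp => hxv hvw _; exists v, w; split=> //.
exact: subseq_uniq (prefix_subseq [:: x; v; w] p) hu.
Qed.

Lemma count_lt_swap (s : seq (T * T)) (P : T -> T -> bool) :
  (forall a b : T, a < b -> count_mem (a, b) s = count_mem (b, a) s) ->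
  count (fun st => (st.1 < st.2) && P st.1 st.2) s =
  count (fun st => (st.2 < st.1) && P st.2 st.1) s.
Proof.
move=> hbal; rewrite !count_sum_mem.
have swap_inj : injective (fun p : T * T => (p.2, p.1)) by move=> [? ?] [? ?] [-> ->].
rewrite [RHS](reindex_inj swap_inj); apply: eq_bigr => -[u v] _ /=.
by case: (boolP (u < v)) => // /hbal ->.
Qed.

Lemma proper_bijective (th : Bpairs (T := T) -> Bpairs) : is_proper th -> bijective th.
Proof.
move=> hp; apply: injF_bij => b1 b2 e; apply: val_inj.
case: hp => [[l [[hl _] hth]]|[l [[hl _] hth]]];
  move: (congr1 val e); rewrite !hth => -[/(bij_inj hl) e1 /(bij_inj hl) e2];
  by rewrite [LHS]surjective_pairing [RHS]surjective_pairing e1 e2.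
Qed.

Lemma zigzag_not_proper (th : Bpairs (T := T) -> Bpairs) (a b c e : T)
    (hcb : c < b) (hab : a < b) :
  a != c -> b != e ->
  val (th (exist _ (c, b) hcb)) = (c, e) -> val (th (exist _ (a, b) hab)) = (a, b) ->
  ~ is_proper th.
Proof.
move=> hac hbe hthc htha [[l [_ hl]]|[l [_ hl]]]; move: hthc htha; rewrite !hl /=.
- by move=> [_ hle] [_ hlb]; rewrite -hle hlb eqxx in hbe.
- by move=> [hlc _] [hla _]; rewrite -hla hlc eqxx in hac.
Qed.

Lemma walk_adj_sym : symmetric (@walk_adj d T).
Proof. by move=> x y; rewrite /walk_adj orbC. Qed.

End Posets.

Section LengthAtMostOne.
Context {d : Order.disp_t} {T : finPOrderType d}.
Hypothesis len_le1 : (poset_length (T := T) <= 1)%N.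

Lemma lt_ltF (x y z : T) : x < y -> (y < z) = false.
Proof.
move=> hxy; apply/negP => hyz; have := sorted_lt_size_le_length (s := [:: x; y; z]).
by rewrite /= hxy hyz => /(_ isT) /leq_trans /(_ len_le1).
Qed.

Lemma lt_minset (x y : T) : x < y -> x \in Min_set.
Proof.
by move=> hxy; rewrite inE; apply/forallP => z; apply/negP => /lt_ltF hzx; rewrite hzx in hxy.
Qed.

Lemma lt_maxset (x y : T) : x < y -> y \in Max_set.
Proof. by move=> hxy; rewrite inE; apply/forallP => z; rewrite (lt_ltF _ hxy). Qed.

Lemma walk_adjE (x y : T) : walk_adj x y = (x < y) || (y < x).
Proof.
have no_between (u v : T) : [forall z, ~~ ((u < z) && (z < v))].
  by apply/forallP => z; apply/negP => /andP[huz]; rewrite (lt_ltF _ huz).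
by rewrite /walk_adj /covers !no_between !andbT.
Qed.

Lemma minset_walk_adj (x y : T) : x \in Min_set -> walk_adj x y -> x < y.
Proof. by move=> hx; rewrite walk_adjE (negbTE (minset_nlt y hx)) orbF. Qed.

Lemma maxset_walk_adj (x y : T) : x \in Max_set -> walk_adj x y -> y < x.
Proof. by move=> hx; rewrite walk_adjE (negbTE (maxset_nlt y hx)). Qed.

Lemma maximal_chain_edge (v w : T) : v < w -> maximal_chain [set x in [:: v; w]].
Proof.
move=> hvw; split=> [|C hC hsub]; first by apply: sorted_lt_chain; rewrite /= hvw.
apply/eqP; rewrite eq_sym eqEcard hsub cardsE (card_uniqP _) /= ?inE ?(lt_eqF hvw) //.
by have /leq_trans/(_ len_le1) := chain_card_le_length hC; case: #|C| => [|[|[]]].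
Qed.

Lemma in_M_bijective (th : Bpairs (T := T) -> Bpairs) : bijective th -> in_M th.
Proof.
move=> hb; split=> // C hC; left=> s hs hsC.
have hsz := leq_trans (sorted_lt_size_le_length hs) len_le1.
have [hs1|hs2] := leqP (size s) 1.
  exists s; split=> //; first by rewrite hsC.
  by move=> x0 i j /andP[hij hj]; exfalso; lia.
case: s hs hsC hsz hs2 => [|x [|y [|//]]] // hs _ _ _.
have hxy : x < y by rewrite /= andbT in hs.
pose e : Bpairs (T := T) := exist _ (x, y) hxy.
exists [:: (val (th e)).1; (val (th e)).2]; split=> //.
- by rewrite /= andbT; exact: (valP (th e)).
- exact: maximal_chain_edge (valP (th e)).
move=> x0 i j /andP[hij /= hj]; have [-> ->] : i = 0 /\ j = 1 by split; lia.
move=> b hbv; have -> : b = e by apply: val_inj.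
by case: (val (th e)).
Qed.

Lemma star_min_le (m : T) :
  Min_set = [set m] -> forall x y : T, (x <= y) = (x == y) || (x == m).
Proof.
move=> hM x y; rewrite le_eqVlt; have [//|hxy /=] := eqVneq x y.
apply/idP/eqP => [/lt_minset|ex]; first by rewrite hM => /set1P.
have : y \notin Min_set by rewrite hM inE -ex eq_sym.
rewrite inE negb_forall => /existsP[z]; rewrite negbK => hzy.
by have := lt_minset hzy; rewrite hM ex => /set1P <-.
Qed.

Lemma star_max_le (m : T) :
  Max_set = [set m] -> forall x y : T, (x <= y) = (x == y) || (y == m).
Proof.
move=> hM x y; rewrite le_eqVlt; have [//|hxy /=] := eqVneq x y.
apply/idP/eqP => [/lt_maxset|ey]; first by rewrite hM => /set1P.
have : x \notin Max_set by rewrite hM inE -ey.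
rewrite inE negb_forall => /existsP[z]; rewrite negbK => hxz.
by have := lt_maxset hxz; rewrite hM ey => /set1P <-.
Qed.

Lemma star_min_proper (m : T) (th : Bpairs (T := T) -> Bpairs) :
  Min_set = [set m] -> injective th -> is_proper th.
Proof.
move=> hM thinj.
have bot (b : Bpairs (T := T)) : (val b).1 = m.
  by apply/set1P; rewrite -hM; exact: lt_minset (valP b).
have top_inj : injective (fun b : Bpairs (T := T) => (val b).2).
  move=> b1 b2 e; apply: val_inj.
  by rewrite [val b1]surjective_pairing [val b2]surjective_pairing !bot e.
have [l [linj lout lth]] := transport_inj top_inj thinj.
have lm : l m = m.
  by apply: lout; apply/codomP => -[b hb]; have := valP b; rewrite bot -hb ltxx.
have lx_m x : (l x == m) = (x == m) by rewrite -{1}lm (inj_eq linj).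
left; exists l; split.
  split; first exact: injF_bij.
  by move=> x y; rewrite !(star_min_le hM) (inj_eq linj) lx_m.
by move=> b; rewrite [LHS]surjective_pairing !bot lm lth.
Qed.

Lemma star_max_proper (m : T) (th : Bpairs (T := T) -> Bpairs) :
  Max_set = [set m] -> injective th -> is_proper th.
Proof.
move=> hM thinj.
have top (b : Bpairs (T := T)) : (val b).2 = m.
  by apply/set1P; rewrite -hM; exact: lt_maxset (valP b).
have bot_inj : injective (fun b : Bpairs (T := T) => (val b).1).
  move=> b1 b2 e; apply: val_inj.
  by rewrite [val b1]surjective_pairing [val b2]surjective_pairing !top e.
have [l [linj lout lth]] := transport_inj bot_inj thinj.
have lm : l m = m.
  by apply: lout; apply/codomP => -[b hb]; have := valP b; rewrite top -hb ltxx.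
have lx_m x : (l x == m) = (x == m) by rewrite -{1}lm (inj_eq linj).
left; exists l; split.
  split; first exact: injF_bij.
  by move=> x y; rewrite !(star_max_le hM) (inj_eq linj) lx_m.
by move=> b; rewrite [LHS]surjective_pairing !top lm lth.
Qed.

Lemma walk_alternates (a : T) (p : seq T) : a \in Min_set -> path walk_adj a p ->
  forall i, (i < size p)%N ->
  if odd i then nth a p i < nth a (a :: p) i else nth a (a :: p) i < nth a p i.
Proof.
move=> ha /(pathP a) hp; elim=> [|i IH] hi; first exact: minset_walk_adj ha (hp 0 hi).
move: (IH (ltnW hi)) (hp i.+1 hi) => /=; case: (odd i) => /= [/lt_minset|/lt_maxset].
  exact: minset_walk_adj.
exact: maxset_walk_adj.
Qed.

Hypothesis no_crown : ~ has_weak_crown (T := T).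

Lemma bypass_weak_crown (a b : T) (p : seq T) :
  a < b -> path walk_adj a p -> uniq (a :: p) -> last a p = b -> p != [:: b] ->
  has_weak_crown (T := T).
Proof.
move=> hab hp hu hl hpb; set w := a :: p; set k := size p.
have alt := walk_alternates (lt_minset hab) hp.
have k_gt0 : (0 < k)%N.
  by rewrite lt0n size_eq0; apply: contraTneq hab => p0; rewrite -hl p0 ltxx.
have pk : nth a p k.-1 = b by rewrite -hl nth_last.
have k_odd : odd k.
  have := alt k.-1; rewrite ltn_predL k_gt0 pk -[in odd k](prednK k_gt0) /= => /(_ isT).
  by case: (odd k.-1); rewrite //= (lt_ltF _ hab).
have k_neq1 : k != 1%N.
  by move: hl hpb; rewrite /k; case: (p) => [|x []] //= ->; rewrite eqxx.
set m := k./2; have k_eq : k = m.*2.+1 by rewrite -[in LHS](odd_double_half k) k_odd.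
exists m.+1, (fun i => nth a w i.*2), (fun i => nth a w i.*2.+1); split.
- by move: k_neq1; rewrite k_eq ltnS; case: (m).
- by apply: uniq_nth_even_odd hu _; rewrite /= -/k k_eq doubleS.
- by move=> i hi; have := alt i.*2 ltac:(lia); rewrite odd_double.
- by move=> i hi; have := alt i.*2.+1 ltac:(lia); rewrite /= odd_double.
- by move: pk; rewrite /= k_eq /= => ->.
Qed.

Lemma edge_bridge (a b : T) : a < b -> ~~ connect (edge_removed walk_adj a b) a b.
Proof.
move=> hab; apply/negP => /connectP[p0 hp0 hl0].
case: (shortenP hp0) hl0 => p hp hu _ hl {hp0 p0}.
have hp' : path walk_adj a p by apply: sub_path hp => u v /andP[/andP[]].
have hpb : p != [:: b] by apply: contraTneq hp => ->; rewrite /= /edge_removed eqxx andbF.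
exact: no_crown (bypass_weak_crown hab hp' hu (esym hl) hpb).
Qed.

Lemma admissible_all (th : Bpairs (T := T) -> Bpairs) : admissible th.
Proof.
move=> u0 rest /andP[hp /eqP hl] z.
have hbal a b (hab : a < b) := bridge_crossings walk_adj_sym (edge_bridge hab) hp hl.
pose img_of (end_ : T * T -> T) u v :=
  [exists b, (end_ (val b) == z) && (val (th b) == (u, v))].
rewrite /s_plus /s_minus /t_plus /t_minus.
by rewrite (count_lt_swap (img_of fst) hbal) (count_lt_swap (img_of snd) hbal) !subrr.
Qed.

Lemma in_AM_bijective (th : Bpairs (T := T) -> Bpairs) : bijective th -> in_AM th.
Proof. by move=> hb; split; [exact: in_M_bijective | exact: admissible_all]. Qed.

Lemma zigzag_nonproper_AM (a b c e : T) :
  c < b -> c < e -> a < b -> a != c -> b != e ->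
  exists th : Bpairs (T := T) -> Bpairs, in_AM th /\ ~ is_proper th.
Proof.
move=> hcb hce hab hac hbe.
pose ecb : Bpairs (T := T) := exist _ (c, b) hcb.
pose ece : Bpairs (T := T) := exist _ (c, e) hce.
pose eab : Bpairs (T := T) := exist _ (a, b) hab.
have neq_ab (f : Bpairs (T := T)) : (val f).1 = c -> f != eab.
  by move=> hf; apply: contra_neq hac => hfe; rewrite -hf hfe.
exists (tperm ecb ece); split; first exact/in_AM_bijective/injF_bij/perm_inj.
apply: (zigzag_not_proper (hcb := hcb) (hab := hab) hac hbe); first by rewrite tpermL.
by rewrite tpermD ?neq_ab.
Qed.

Hypothesis connected : poset_connected (T := T).

Lemma minset_zigzag (x y : T) : x \in Min_set -> y \in Min_set -> y != x ->
  exists w z : T, [/\ x < w, z < w & z != x].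
Proof.
move=> hx hy hyx; have hxy : x != y by rewrite eq_sym.
have nxy : ~~ (x >=< y).
  by apply: contra hyx => hxy'; rewrite eq_le !minset_comparable_le // comparable_sym.
have [v [w [hxv hvw]]] := connected_path2 connected hxy nxy.
rewrite /= !inE !negb_or andbT => /andP[/andP[hxv' hxw] hvw'].
have hlt : x < v by rewrite lt_neqAle hxv' minset_comparable_le.
exists v, w; split; [done | | by rewrite eq_sym].
by rewrite lt_neqAle eq_sym hvw' maxset_comparable_ge // (lt_maxset hlt).
Qed.

Lemma maxset_zigzag (x y : T) : x \in Max_set -> y \in Max_set -> y != x ->
  exists w z : T, [/\ w < x, w < z & z != x].
Proof.
move=> hx hy hyx; have hxy : x != y by rewrite eq_sym.
have nxy : ~~ (x >=< y).
  by apply: contra hyx => hxy'; rewrite eq_le !maxset_comparable_ge // comparable_sym.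
have [v [w [hxv hvw]]] := connected_path2 connected hxy nxy.
rewrite /= !inE !negb_or andbT => /andP[/andP[hxv' hxw] hvw'].
have hlt : v < x by rewrite lt_neqAle eq_sym hxv' maxset_comparable_ge.
exists v, w; split; [done | | by rewrite eq_sym].
by rewrite lt_neqAle hvw' minset_comparable_le // (lt_minset hlt).
Qed.

Lemma exists_nonproper_AM : (0 < poset_length (T := T))%N ->
  #|Min_set (T := T)| != 1%N -> #|Max_set (T := T)| != 1%N ->
  exists th : Bpairs (T := T) -> Bpairs, in_AM th /\ ~ is_proper th.
Proof.
move=> hpos hmin hmax.
have [x [y hxy]] := exists_lt_of_length_gt0 hpos.
have [x' hx' hx'x] := exists_other_in (lt_minset hxy) hmin.
have [b [a' [hxb ha'b ha'x]]] := minset_zigzag (lt_minset hxy) hx' hx'x.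
have [b' hb' hb'b] := exists_other_in (lt_maxset hxb) hmax.
have [c [e [hcb hce heb]]] := maxset_zigzag (lt_maxset hxb) hb' hb'b.
have [a hab hac] : exists2 a, a < b & a != c.
  by have [<-|] := eqVneq x c; [exists a' | exists x].
by apply: (zigzag_nonproper_AM hcb hce hab hac); rewrite eq_sym.
Qed.

End LengthAtMostOne.

Theorem corollary4p7 (d : Order.disp_t) (T : finPOrderType d) :
  poset_connected (T := T) ->
  poset_length (T := T) = 1%N ->
  ~ has_weak_crown (T := T) ->
  ((forall th : Bpairs (T := T) -> Bpairs, in_AM th <-> is_proper th) <->
   (#|Min_set (T := T)| = 1%N \/ #|Max_set (T := T)| = 1%N)).
Proof.
move=> connected hlen no_crown.
have len_le1 : (poset_length (T := T) <= 1)%N by rewrite hlen.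
have len_gt0 : (0 < poset_length (T := T))%N by rewrite hlen.
split=> [AM_eq_P | star th].
- have [->|hmin] := eqVneq #|Min_set (T := T)| 1%N; first by left.
  have [->|hmax] := eqVneq #|Max_set (T := T)| 1%N; first by right.
  have [th [hAM not_proper]] :=
    exists_nonproper_AM len_le1 no_crown connected len_gt0 hmin hmax.
  by case: not_proper; apply/AM_eq_P.
split=> [[[/bij_inj thinj _] _] | /proper_bijective/(in_AM_bijective len_le1 no_crown) //].
case: star => /eqP/cards1P[m hm].
  exact: star_min_proper hm thinj.
exact: star_max_proper hm thinj.
Qed.
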